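(* Let $M(n)$ denote the minimum, over all forcibly connected graphical degree sequences of length $n$, of the largest term of the sequence. Then $M(n)=\Omega(\sqrt{n})$; that is, there is a constant $c>0$ such that $M(n)>c\sqrt{n}$ for all sufficiently large $n$.
   Context: A graphical degree sequence of length $n$ is a non-increasing sequence of non-negative integers $d_1\ge\cdots\ge d_n$ that is the vertex degree sequence of some simple graph (finite, undirected, no loops or multiple edges) on $n$ vertices; such a graph is a realization. A graphical degree sequence is forcibly connected if every one of its realizations is connected. *)

From mathcomp Require Import all_boot all_order all_algebra.
Set Implicit Arguments. Unset Strict Implicit. Unset Printing Implicit Defensive.

Definition simple_graph (n : nat) (e : rel 'I_n) : Prop :=
  irreflexive e /\ symmetric e.

Definition deg (n : nat) (e : rel 'I_n) (i : 'I_n) : nat := #|[pred j | e i j]|.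

Definition realizes (n : nat) (d : seq nat) (e : rel 'I_n) : Prop :=
  simple_graph e /\ forall i : 'I_n, deg e i = nth 0 d i.

Definition graphical_seq (n : nat) (d : seq nat) : Prop :=
  size d = n /\ sorted geq d /\ exists e : rel 'I_n, realizes d e.

Definition connected_graph (n : nat) (e : rel 'I_n) : Prop :=
  forall i j : 'I_n, connect e i j.

Definition forcibly_connected (n : nat) (d : seq nat) : Prop :=
  graphical_seq n d /\ forall e : rel 'I_n, realizes d e -> connected_graph e.

From mathcomp Require Import all_boot all_order all_algebra.
From mathcomp Require Import reals.
From mathcomp Require Import zify lra.
Set Implicit Arguments. Unset Strict Implicit. Unset Printing Implicit Defensive.

(* Let D be the largest term of d. If n is large compared with D^2, then by
   pigeonhole some value k is the degree of at least k + 1 vertices; fix a set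
   S of k + 1 of them. Starting from any realization, as long as S is not a
   clique, two 2-switches through an edge chosen far away from S strictly
   increase the number of edges inside S while preserving all degrees (such an
   edge exists as soon as n > (2D + 3)(D + 1)). The process ends with a
   realization in which S is a clique; its vertices then have all their
   neighbours inside S, so S is a component of size k + 1 < n and d is not
   forcibly connected. Hence n <= (2D + 3)(D + 1). *)

Lemma bounded_ascent (X : Type) (P Q : X -> Prop) (f : X -> nat) (B : nat) :
  (forall x, P x -> f x <= B) ->
  (forall x, P x -> Q x \/ exists2 y, P y & f x < f y) ->
  forall x, P x -> exists2 y, P y & Q y.
Proof.
move=> fB ascend x Px; move: {2}(B - f x) (leqnn (B - f x)) => m.
elim: m x Px => [|m IH] x Px hm; case: (ascend x Px) => [Qx|[y Py lt_xy]];
  try by exists x.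
- by have := fB y Py; lia.
- by apply: (IH y Py); have := fB y Py; lia.
Qed.

Lemma card_bigcup_leq_sum (I T : finType) (A : {pred I}) (F : I -> {set T}) :
  #|\bigcup_(i in A) F i| <= \sum_(i in A) #|F i|.
Proof.
elim/big_rec2: _ => [|i X m _ IH]; first by rewrite cards0.
by apply: leq_trans (leq_card_setU _ _) _; rewrite leq_add2l.
Qed.

Lemma exists_subset_card (T : finType) (A : {set T}) m :
  m <= #|A| -> exists2 S : {set T}, S \subset A & #|S| = m.
Proof.
case/card_geqP=> s [uniq_s size_s sub_s]; exists [set x in s].
  by apply/subsetP=> x; rewrite inE => /sub_s.
by rewrite cardsE (card_uniqP uniq_s).
Qed.

Lemma exists_large_fibre (T : finType) (f : T -> nat) m :
  m * m < #|[set x | f x <= m]| -> exists k, k < #|[set x | f x == k]|.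
Proof.
elim: m => [|m IH] big.
  exists 0; rewrite (eq_card (B := [set x | f x <= 0])) // => x.
  by rewrite !inE leqn0.
have split_le :
    [set x | f x <= m.+1] \subset [set x | f x <= m] :|: [set x | f x == m.+1].
  by apply/subsetP => x; rewrite !inE leq_eqVlt ltnS orbC.
have := leq_trans (subset_leq_card split_le) (leq_card_setU _ _).
case: (ltnP (m * m) #|[set x | f x <= m]|) => [/IH // | small] bound.
by exists m.+1; nia.
Qed.

Lemma nth_leq_head (s : seq nat) i : sorted geq s -> nth 0 s i <= head 0 s.
Proof.
move=> sorted_s; case: (ltnP i (size s)) => [lt_i | le_i]; last by rewrite nth_default.
have geq_trans : transitive geq by move=> a b c ba cb; apply: leq_trans cb ba.
rewrite -nth0; apply: (sorted_leq_nth geq_trans leqnn) => //.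
by rewrite inE (leq_ltn_trans _ lt_i).
Qed.

Section Realizations.

Variable n : nat.
Implicit Types (e : rel 'I_n) (S T : {set 'I_n}) (d : seq nat).

Definition same_pair (i j a b : 'I_n) : bool :=
  ((i == a) && (j == b)) || ((i == b) && (j == a)).

Lemma same_pairC i j a b : same_pair i j a b = same_pair i j b a.
Proof. by rewrite /same_pair orbC. Qed.

Lemma same_pair_sym i j a b : same_pair i j a b = same_pair j i a b.
Proof. by rewrite /same_pair orbC andbC [(j == b) && _]andbC. Qed.

Lemma same_pair_diag i a b : a != b -> same_pair i i a b = false.
Proof.
by move=> ab; apply: contraNF ab => /orP[] /andP[/eqP <- /eqP <-].
Qed.

Lemma same_pair_mem (i j a b : 'I_n) :
  same_pair i j a b -> (a \in [:: i; j]) && (b \in [:: i; j]).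
Proof. by rewrite !inE => /orP[] /andP[/eqP-> /eqP->]; rewrite !eqxx ?orbT. Qed.

Definition switch e (p q r s : 'I_n) : rel 'I_n := fun i j =>
  if same_pair i j p r || same_pair i j q s then true
  else if same_pair i j p q || same_pair i j r s then false
  else e i j.

Lemma switch_swap_pairs e p q r s : switch e p q r s =2 switch e r s p q.
Proof.
move=> i j; rewrite /switch (same_pairC i j r p) (same_pairC i j s q).
by rewrite (orbC (same_pair i j r s)).
Qed.

Lemma switch_swap_ends e p q r s : switch e p q r s =2 switch e q p s r.
Proof.
move=> i j; rewrite /switch (same_pairC i j q p) (same_pairC i j s r).
by rewrite (orbC (same_pair i j q s)).
Qed.

Lemma switch_simple e p q r s :
  simple_graph e -> p != r -> q != s -> simple_graph (switch e p q r s).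
Proof.
move=> [irr sym] pr qs; split.
  by move=> i; rewrite /switch (same_pair_diag _ pr) (same_pair_diag _ qs) irr; case: ifP.
by move=> i j; rewrite /switch !(same_pair_sym i j) sym.
Qed.

Lemma switch_first e p q r s : p != q -> p != r -> p != s ->
  switch e p q r s p =1 [pred j | (j == r) || (j != q) && e p j].
Proof.
move=> pq pr ps j; rewrite /switch /same_pair /= eqxx.
by rewrite (negbTE pr) (negbTE pq) (negbTE ps) /= !orbF; case: (j == r); case: (j == q).
Qed.

Lemma switch_other e p q r s i : i \notin [:: p; q; r; s] ->
  switch e p q r s i =1 e i.
Proof.
rewrite !inE !negb_or => /and4P[ip iq ir i_s] j.
by rewrite /switch /same_pair (negbTE ip) (negbTE iq) (negbTE ir) (negbTE i_s).
Qed.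

Lemma eq_deg e e' : e =2 e' -> deg e =1 deg e'.
Proof. by move=> ee' v; apply: eq_card => j; rewrite !inE ee'. Qed.

Lemma deg_exchange e e' v o m : e v o -> ~~ e v m ->
  e' v =1 [pred j | (j == m) || (j != o) && e v j] -> deg e' v = deg e v.
Proof.
move=> evo nevm e'v; rewrite /deg.
rewrite (eq_card (B := [predU1 m & [predD1 [pred j | e v j] & o]])); last first.
  by move=> j; rewrite !inE e'v.
by rewrite cardU1 [in RHS](cardD1 o) !inE evo /= (negbTE nevm) andbF.
Qed.

Lemma deg_switch_first e p q r s : p \notin [:: q; r; s] ->
  e p q -> ~~ e p r -> deg (switch e p q r s) p = deg e p.
Proof.
rewrite !inE !negb_or => /and3P[pq pr ps] epq nepr.
by apply: (deg_exchange epq nepr); apply: switch_first.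
Qed.

Lemma realizes_switch d e p q r s :
  realizes d e -> uniq [:: p; q; r; s] -> e p q -> e r s -> ~~ e p r -> ~~ e q s ->
  realizes d (switch e p q r s).
Proof.
move=> [[irr sym] degs] uniq_pqrs epq ers nepr neqs.
have := uniq_pqrs; rewrite /= !inE !negb_or.
move=> /and4P[/and3P[pq pr ps] /andP[qr qs] rs _].
split; first exact: switch_simple.
move=> v; rewrite -degs.
case: (boolP (v \in [:: p; q; r; s])); last first.
  by move=> vout; apply: eq_card => j; rewrite !inE switch_other.
rewrite !inE => /or4P[] /eqP->.
- by apply: deg_switch_first; rewrite // !inE !negb_or pq pr.
- rewrite (eq_deg (switch_swap_ends e p q r s)).
  by apply: deg_switch_first; rewrite 1?(sym q p) // !inE !negb_or eq_sym pq qs qr.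
- rewrite (eq_deg (switch_swap_pairs e p q r s)).
  by apply: deg_switch_first; rewrite 1?(sym r p) // !inE !negb_or rs eq_sym pr eq_sym qr.
- rewrite (eq_deg (switch_swap_pairs e p q r s)) (eq_deg (switch_swap_ends e r s p q)).
  apply: deg_switch_first; rewrite 1?(sym s r) 1?(sym s q) // !inE !negb_or.
  by rewrite eq_sym rs eq_sym qs eq_sym ps.
Qed.

Definition inner_edges e S : {set 'I_n * 'I_n} :=
  [set ij in setX S S | e ij.1 ij.2].

Lemma card_inner_edges e S : #|inner_edges e S| <= #|S| * #|S|.
Proof.
rewrite -cardsX; apply: subset_leq_card; apply/subsetP => ij.
by rewrite inE => /andP[].
Qed.

Lemma inner_edges_switch_sub e S p q r s : q \notin S -> s \notin S ->
  inner_edges e S \subset inner_edges (switch e p q r s) S.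
Proof.
move=> qS sS; apply/subsetP => [[i j]]; rewrite !inE /= => /andP[/andP[iS jS] eij].
have ijS z : z \in [:: i; j] -> z \in S by rewrite !inE => /orP[] /eqP->.
rewrite iS jS /switch /=; case: ifP => // _; rewrite ifF //.
by apply/negbTE/norP; split; [apply: contraNN qS | apply: contraNN sS];
  move=> /same_pair_mem /andP[_ /ijS].
Qed.

Lemma inner_edges_switch_lt e S p q r s :
  p \in S -> r \in S -> q \notin S -> s \notin S -> ~~ e p r ->
  #|inner_edges e S| < #|inner_edges (switch e p q r s) S|.
Proof.
move=> pS rS qS sS nepr; apply/proper_card/properP; split.
  exact: inner_edges_switch_sub.
exists (p, r); first by rewrite !inE /= pS rS /switch /same_pair !eqxx.
by rewrite !inE /= (negbTE nepr) andbF.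
Qed.

Definition nbhd e v : {set 'I_n} := [set j | e v j].

Lemma deg_nbhd e v : deg e v = #|nbhd e v|.
Proof. by apply: eq_card => j; rewrite !inE. Qed.

Lemma exists_outer_neighbour e S u w :
  irreflexive e -> #|S| <= (deg e u).+1 -> u \in S -> w \in S -> u != w -> ~~ e u w ->
  exists2 x, x \notin S & e u x.
Proof.
move=> irr cardS uS wS uw neuw.
have : ~~ (nbhd e u \subset S :\ u :\ w).
  apply/negP => /subset_leq_card; rewrite -deg_nbhd.
  have : #|S :\ u :\ w|.+2 = #|S|.
    by rewrite [in RHS](cardsD1 u) uS (cardsD1 w (S :\ u)) !inE eq_sym uw wS.
  lia.
case/subsetPn => x; rewrite !inE => eux.
have xw : x != w by apply: contraNneq neuw => <-.
have xu : x != u by apply: contraTneq eux => ->; rewrite irr.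
by rewrite xw xu /= => xS; exists x.
Qed.

Lemma exists_edge_away e T D :
  symmetric e -> (forall v, deg e v <= D) -> (forall v, 0 < deg e v) ->
  #|T| * D.+1 < n ->
  exists a b, [/\ e a b, a \notin T, b \notin T & forall t, t \in T -> ~~ e t a].
Proof.
move=> sym degD deg_pos small.
pose W := \bigcup_(t in T) (t |: nbhd e t).
have cardW : #|W| <= #|T| * D.+1.
  apply: leq_trans (card_bigcup_leq_sum _ _) _; rewrite -sum_nat_const.
  apply: leq_sum => t _; rewrite cardsU1 -deg_nbhd -[D.+1]add1n.
  exact: leq_add (leq_b1 _) (degD t).
have [a aW] : exists a, a \notin W.
  have /card_gt0P[a] : 0 < #|~: W| by have := cardsC W; rewrite card_ord; lia.
  by rewrite inE; exists a.
have [b eab] : exists b, e a b by have /card_gt0P[b] := deg_pos a; exists b.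
have away t : t \in T -> ~~ e t a.
  by move=> tT; apply: contra aW => eta; apply/bigcupP; exists t; rewrite // !inE eta orbT.
exists a, b; split=> //.
  by apply: contra aW => aT; apply/bigcupP; exists a; rewrite // !inE eqxx.
by apply: contraL eab => bT; rewrite sym away.
Qed.

Lemma switch_to_more_inner_edges d e S D u w :
  realizes d e -> (forall v, v \in S -> #|S| <= (nth 0 d v).+1) ->
  (forall v : 'I_n, nth 0 d v <= D) -> (forall v : 'I_n, 0 < nth 0 d v) ->
  (#|S| + D + 2) * D.+1 < n ->
  u \in S -> w \in S -> u != w -> ~~ e u w ->
  exists2 e', realizes d e' & #|inner_edges e S| < #|inner_edges e' S|.
Proof.
move=> re degS degD deg_pos big uS wS uw neuw.
have [[irr sym] degE] := re.
have [x xS eux] : exists2 x, x \notin S & e u x.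
  by apply: (exists_outer_neighbour irr _ uS wS); rewrite ?degE ?degS.
have [y yS ewy] : exists2 y, y \notin S & e w y.
  apply: (exists_outer_neighbour irr _ wS uS); rewrite ?degE ?degS //.
    by rewrite eq_sym.
  by rewrite sym.
(* Trade [ux], [ab] for [ua], [xb], then [ua], [wy] for [uw], [ay]; taking [a]
   and [b] outside [T] and [a] non-adjacent to [T] makes both switches legal. *)
pose T := S :|: [set x; y] :|: nbhd e x.
have cardT : #|T| <= #|S| + D + 2.
  have cardU : #|T| <= #|S :|: [set x; y]| + #|nbhd e x| := leq_card_setU _ _.
  have cardSxy : #|S :|: [set x; y]| <= #|S| + #|[set x; y]| := leq_card_setU _ _.
  have cardxy : #|[set x; y]| <= 2 by rewrite cards2; case: (x != y).
  have := degD x; rewrite -degE deg_nbhd; lia.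
have [a [b [eab aT bT away]]] : exists a b,
    [/\ e a b, a \notin T, b \notin T & forall t, t \in T -> ~~ e t a].
  apply: exists_edge_away => // [v|v|]; rewrite ?degE //.
  by apply: leq_ltn_trans big; rewrite leq_mul2r cardT orbT.
have inT z : z \in S -> z \in T by move=> zS; rewrite !inE zS.
have [aS bS] : a \notin S /\ b \notin S.
  by split; [apply: contra (inT a) aT | apply: contra (inT b) bT].
have ST z z' : z \in S -> z' \notin S -> z != z' by move=> zS; apply: contraNneq => <-.
have [ux ua ub uy] : [/\ u != x, u != a, u != b & u != y] by split; apply: ST.
have [wx wa wb wy] : [/\ w != x, w != a, w != b & w != y] by split; apply: ST.
have [xT yT] : x \in T /\ y \in T by rewrite !inE !eqxx !orbT.
have [ax ay bx] : [/\ a != x, a != y & b != x].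
  by split; [apply: contraNneq aT => -> | apply: contraNneq aT => ->
             | apply: contraNneq bT => ->].
have ab : a != b by apply: contraTneq eab => ->; rewrite irr.
have neua : ~~ e u a by apply: away; rewrite inT.
have neay : ~~ e a y by rewrite sym away.
have nexb : ~~ e x b by apply: contra bT => exb; rewrite !inE exb orbT.
pose e1 := switch e u x a b.
have re1 : realizes d e1.
  apply: realizes_switch => //=.
  by rewrite !inE !negb_or ux ua ub ![x == _]eq_sym ax bx ab.
have e1ua : e1 u a by rewrite /e1 switch_first //= eqxx.
have e1wy : e1 w y by rewrite /e1 switch_other // !inE !negb_or eq_sym uw wx wa wb.
have ne1uw : ~~ e1 u w by rewrite /e1 switch_first //= (negbTE wa) (negbTE neuw) andbF.
have ne1ay : ~~ e1 a y.
  have au : a != u by rewrite eq_sym.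
  rewrite /e1 switch_swap_pairs (switch_first _ ab au ax) /=.
  by rewrite eq_sym (negbTE uy) (negbTE neay) andbF.
exists (switch e1 u a w y).
  apply: realizes_switch => //=.
  by rewrite !inE !negb_or ua uw uy eq_sym wa ay wy.
apply: (leq_ltn_trans _ (inner_edges_switch_lt uS wS aS yS ne1uw)).
exact/subset_leq_card/inner_edges_switch_sub.
Qed.

Definition clique e S := forall u w, u \in S -> w \in S -> u != w -> e u w.

Lemma exists_clique_realization d e S D :
  realizes d e -> (forall v, v \in S -> #|S| <= (nth 0 d v).+1) ->
  (forall v : 'I_n, nth 0 d v <= D) -> (forall v : 'I_n, 0 < nth 0 d v) ->
  (#|S| + D + 2) * D.+1 < n ->
  exists2 e', realizes d e' & clique e' S.
Proof.
move=> re degS degD deg_pos big.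
apply: (bounded_ascent (f := fun e => #|inner_edges e S|) (B := #|S| * #|S|) _ _ re).
  by move=> e0 _; apply: card_inner_edges.
move=> e0 re0.
case: (boolP [forall u in S, forall w in S, (u != w) ==> e0 u w]) => [/forall_inP cl | ].
  by left => u w uS wS uw; move: (cl u uS) => /forall_inP/(_ w wS)/implyP; apply.
case/forall_inPn => u uS /forall_inPn[w wS]; rewrite negb_imply => /andP[uw neuw].
by right; apply: (switch_to_more_inner_edges re0 degS degD deg_pos big uS wS uw neuw).
Qed.

Lemma clique_closed e S v j :
  clique e S -> v \in S -> deg e v < #|S| -> e v j -> j \in S.
Proof.
move=> cl vS small evj.
have sub : S :\ v \subset nbhd e v.
  by apply/subsetP => x /setD1P[xv xS]; rewrite inE cl // eq_sym.
have same_card : #|S :\ v| = #|nbhd e v|.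
  apply/eqP; rewrite eqn_leq subset_leq_card // -deg_nbhd.
  by rewrite (cardsD1 v S) vS add1n ltnS in small.
have := elimT (subset_cardP same_card) sub j.
by rewrite !inE evj => /andP[].
Qed.

Lemma closed_not_connected e S u z : symmetric e ->
  (forall v j, v \in S -> e v j -> j \in S) -> u \in S -> z \notin S ->
  ~ connected_graph e.
Proof.
move=> sym closedS uS zS conn.
have cl : closed e (mem S).
  move=> x y exy; apply/idP/idP => [/closedS|]; first exact.
  by move/closedS; apply; rewrite sym.
by have := closed_connect cl (conn u z); rewrite uS (negbTE zS).
Qed.

End Realizations.

Lemma forcibly_connected_size_bound n d : forcibly_connected n d -> 2 <= n ->
  n <= (2 * head 0 d + 3) * (head 0 d).+1.
Proof.
move=> [[_ [sorted_d [e re]]] conn] n2.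
set D := head 0 d.
have degD (v : 'I_n) : nth 0 d v <= D by apply: nth_leq_head.
have [[_ sym] degE] := re.
case: (boolP [exists v : 'I_n, nth 0 d v == 0]).
  move=> /existsP[v /eqP dv0].
  have [z zv] : exists z, z \in ~: [set v].
    by apply/card_gt0P; have := cardsC [set v]; rewrite card_ord cards1; lia.
  rewrite in_setC in zv; exfalso.
  apply: (closed_not_connected sym _ (set11 v) zv (conn e re)) => _ j /set1P-> evj.
  have /card0_eq/(_ j) : deg e v = 0 by rewrite degE.
  by rewrite inE evj.
move=> /existsPn no_isolated.
have deg_pos (v : 'I_n) : 0 < nth 0 d v by rewrite lt0n no_isolated.
rewrite leqNgt; apply/negP => big.
have [k big_fibre] : exists k, k < #|[set v : 'I_n | nth 0 d v == k]|.
  apply: (exists_large_fibre (m := D)).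
  rewrite (_ : [set v | _] = setT) ?cardsT ?card_ord; first by nia.
  by apply/setP => v; rewrite !inE degD.
have [S S_fibre cardS] := exists_subset_card big_fibre.
have degS v : v \in S -> nth 0 d v = k.
  by move/(subsetP S_fibre); rewrite inE => /eqP.
have [u uS] : exists u, u \in S by apply/card_gt0P; rewrite cardS.
have kD : k <= D by rewrite -(degS u uS).
have [e' re' cl] : exists2 e', realizes d e' & clique e' S.
  apply: (exists_clique_realization re _ degD deg_pos).
    by move=> v vS; rewrite degS ?cardS.
  by apply: leq_ltn_trans big; rewrite cardS leq_mul2r; apply/orP; right; lia.
have [z zS] : exists z, z \in ~: S.
  by apply/card_gt0P; have := cardsC S; rewrite card_ord cardS; nia.
have [[_ sym'] degE'] := re'.
rewrite in_setC in zS.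
apply: (closed_not_connected sym' _ uS zS (conn e' re')) => v j vS.
by apply: (clique_closed cl vS); rewrite degE' degS // cardS.
Qed.

Import Order.TTheory GRing.Theory Num.Theory.
Local Open Scope ring_scope.

Lemma sqrt_natr_lt (R : rcfType) (m k : nat) :
  (m < k * k)%N -> Num.sqrt (m%:R : R) < k%:R.
Proof.
move=> lt_m; have k_gt0 : (0 < k)%N by case: k lt_m.
rewrite -[k%:R]ger0_norm // -sqrtr_sqr ltr_sqrt ?exprn_gt0 ?ltr0n //.
by rewrite -natrX ltr_nat -mulnn.
Qed.

Theorem theorem1 (R : realType) :
  exists c : R, 0 < c /\
  exists N : nat, forall n : nat, (N <= n)%N ->
    forall d : seq nat, forcibly_connected n d ->
      c * Num.sqrt (n%:R) < (head 0%N d)%:R.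
Proof.
exists 4^-1; split; first by rewrite invr_gt0 ltr0n.
exists 4%N => n n4 d fc.
have := forcibly_connected_size_bound fc (leq_trans (isT : (2 <= 4)%N) n4).
set D := head 0%N d => bound.
have D_gt0 : (0 < D)%N by case: D bound; lia.
have /(sqrt_natr_lt R) : (n < (4 * D) * (4 * D))%N by nia.
rewrite natrM; lra.
Qed.
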